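(* Let $w \in \mathbb{R}^n$ with $w_j > 0$ for all $j$, and let $x \in \mathbb{R}^n$ with $x_j > 0$ for $2 \le j \le n$. Define $c_x : [x_1^-, \infty) \to \mathbb{R}$, $c_x(t) = \|x - \phi_t(x)\|^2$. Then: (i) $c_x$ is piecewise $C^\infty$ with break points $b_j = \frac{w_1}{w_j} x_j$ ($2\le j\le n$), it is continuously differentiable at these break points, each smooth piece is strongly convex, and $c_x$ is strongly convex on $[x_1^-,\infty)$ and attains its minimum. (ii) Let $t^* = \arg\min_{t \in [x_1^-,\infty)} c_x(t)$. Then the Euclidean projection of $x$ onto $\Omega_1$ is \[ \arg\min_{z \in \Omega_1} \|x - z\| = \begin{cases} \phi_{x_1^+}(x) & \text{if } t^* < x_1^+,\\ \phi_{t^*}(x) & \text{if } t^* \in [x_1^+, 1],\\ \phi_1(x) & \text{if } t^* > 1.\end{cases} \]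
   Context: $\|\cdot\|$ is the Euclidean norm on $\mathbb{R}^n$. $\Omega_1 := \{ z \in \mathbb{R}^n_+ : z_1 \le 1,\ w_1 z_j \le w_j z_1 \text{ for } 2 \le j \le n\}$. For $t \in \mathbb{R}$, $\phi_t : \mathbb{R}^n \to \mathbb{R}^n$ is defined by $\phi_t(x)_1 = t$, and for $j \ne 1$: $\phi_t(x)_j = \frac{w_j}{w_1} t$ if $\frac{w_1}{w_j} x_j \ge t$, and $\phi_t(x)_j = x_j$ otherwise. $x_1^+ := \min\{1, \max\{0, x_1\}\}$ and $x_1^- := \min\{0, x_1\}$. *)

From Stdlib Require Import Reals Lra Lia.
Open Scope R_scope.

(* Vectors of R^n are functions nat -> R, using the paper's 1-based
   coordinates 1..n; values at other indices are irrelevant. *)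

Fixpoint sumR (n : nat) (f : nat -> R) : R :=
  match n with
  | O => 0
  | S m => sumR m f + f (S m)
  end.

Definition norm2 (n : nat) (v : nat -> R) : R := sumR n (fun j => (v j) ^ 2).
Definition enorm (n : nat) (v : nat -> R) : R := sqrt (norm2 n v).

Definition Omega1 (n : nat) (w z : nat -> R) : Prop :=
  (forall j, (1 <= j <= n)%nat -> 0 <= z j) /\
  z 1%nat <= 1 /\
  (forall j, (2 <= j <= n)%nat -> w 1%nat * z j <= w j * z 1%nat).

Definition phi (w : nat -> R) (t : R) (x : nat -> R) : nat -> R :=
  fun j =>
    if Nat.eqb j 1 then t
    else if Rle_dec t (w 1%nat / w j * x j) then w j / w 1%nat * t
    else x j.

Definition x1plus (x : nat -> R) : R := Rmin 1 (Rmax 0 (x 1%nat)).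
Definition x1minus (x : nat -> R) : R := Rmin 0 (x 1%nat).

Definition cx (n : nat) (w x : nat -> R) (t : R) : R :=
  norm2 n (fun j => x j - phi w t x j).

Definition smooth (f : R -> R) : Prop :=
  exists D : nat -> R -> R,
    D O = f /\ forall k t, derivable_pt_lim (D k) t (D (S k) t).

Definition strongly_convex_on (S : R -> Prop) (f : R -> R) : Prop :=
  exists mu, 0 < mu /\
    forall a b l, S a -> S b -> 0 <= l <= 1 ->
      f (l * a + (1 - l) * b)
        <= l * f a + (1 - l) * f b - mu / 2 * l * (1 - l) * (a - b) ^ 2.

(* interval [a, b] (b = Some _) or [a, oo) (b = None) *)
Definition in_piece (a : R) (b : option R) (t : R) : Prop :=
  a <= t /\ match b with Some b' => t <= b' | None => True end.

Definition below_end (t : R) (b : option R) : Prop :=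
  match b with Some b' => t < b' | None => True end.

Definition breakpt (w x : nat -> R) (j : nat) : R := w 1%nat / w j * x j.

From Stdlib Require Import Reals Lra Lia Psatz.
Open Scope R_scope.

(* Since [phi_t(x)_j = min(x_j, (w_j / w_1) t)] for [j >= 2],
     c_x(t) = (x_1 - t)^2 + sum_{j >= 2} (w_j / w_1)^2 ((b_j - t)_+)^2,
   a strongly convex quadratic plus convex C^1 terms, each quadratic on either side of its
   break point [b_j].  For [z] in [Omega_1], [z_j <= (w_j / w_1) z_1] gives coordinatewise
   [|x_j - phi_{z_1}(x)_j| <= |x_j - z_j|], hence [||x - z||^2 >= c_x(z_1)] with equality only
   at [z = phi_{z_1}(x)].  As [z_1] ranges over [[0, 1]], the projection is [phi_t(x)] for the
   minimiser [t] of [c_x] over [[0, 1]], which by convexity is [t^*] clamped to [[x_1^+, 1]]. *)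

Lemma sumR_ext n f g : (forall j, (1 <= j <= n)%nat -> f j = g j) -> sumR n f = sumR n g.
Proof.
  induction n as [|n IH]; intros H; simpl; [reflexivity|].
  rewrite IH by (intros; apply H; lia).
  rewrite H by lia; reflexivity.
Qed.

Lemma sumR_le n f g : (forall j, (1 <= j <= n)%nat -> f j <= g j) -> sumR n f <= sumR n g.
Proof.
  induction n as [|n IH]; intros H; simpl; [lra|].
  assert (sumR n f <= sumR n g) by (apply IH; intros; apply H; lia).
  assert (f (S n) <= g (S n)) by (apply H; lia).
  lra.
Qed.

Lemma sumR_lt n f g k : (forall j, (1 <= j <= n)%nat -> f j <= g j) ->
  (1 <= k <= n)%nat -> f k < g k -> sumR n f < sumR n g.
Proof.
  induction n as [|n IH]; intros H Hk Hfk; simpl; [lia|].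
  assert (f (S n) <= g (S n)) by (apply H; lia).
  destruct (Nat.eq_dec k (S n)) as [->|Hne].
  - assert (sumR n f <= sumR n g) by (apply sumR_le; intros; apply H; lia). lra.
  - assert (sumR n f < sumR n g) by (apply IH; [intros; apply H; lia | lia | exact Hfk]). lra.
Qed.

Lemma sumR_eq_le n f g : (forall j, (1 <= j <= n)%nat -> f j <= g j) ->
  sumR n f = sumR n g -> forall j, (1 <= j <= n)%nat -> f j = g j.
Proof.
  intros H He j Hj.
  destruct (Rle_lt_or_eq_dec _ _ (H j Hj)) as [Hlt|]; [|assumption].
  pose proof (sumR_lt n f g j H Hj Hlt). lra.
Qed.

Lemma sumR_nonneg n f : (forall j, (1 <= j <= n)%nat -> 0 <= f j) -> 0 <= sumR n f.
Proof.
  induction n as [|n IH]; intros H; simpl; [lra|].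
  assert (0 <= sumR n f) by (apply IH; intros; apply H; lia).
  assert (0 <= f (S n)) by (apply H; lia).
  lra.
Qed.

Lemma sumR_indicator1 n c : (1 <= n)%nat -> sumR n (fun j => if Nat.eqb j 1 then c else 0) = c.
Proof.
  induction n as [|[|n] IH]; intros Hn; [lia| simpl; ring |].
  change (sumR (S n) (fun j => if Nat.eqb j 1 then c else 0) + 0 = c).
  rewrite IH by lia; ring.
Qed.

Lemma derivable_pt_lim_quadratic_remainder f t l K :
  (forall h, Rabs (f (t + h) - f t - l * h) <= K * h ^ 2) -> derivable_pt_lim f t l.
Proof.
  intros Hrem eps Heps.
  set (K' := Rabs K + 1).
  assert (HK' : 0 < K') by (unfold K'; pose proof (Rabs_pos K); lra).
  assert (Hd : 0 < eps / K') by (apply Rdiv_lt_0_compat; assumption).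
  exists (mkposreal _ Hd); simpl; intros h Hh0 Hh.
  assert (Hah : 0 < Rabs h) by (apply Rabs_pos_lt; assumption).
  replace ((f (t + h) - f t) / h - l) with ((f (t + h) - f t - l * h) / h) by (field; assumption).
  unfold Rdiv; rewrite Rabs_mult, Rabs_inv.
  assert (Hh2 : h ^ 2 = Rabs h * Rabs h) by (rewrite <- Rabs_mult, Rabs_right; nra).
  assert (Hq : Rabs (f (t + h) - f t - l * h) <= K' * Rabs h * Rabs h).
  { specialize (Hrem h); rewrite Hh2 in Hrem.
    unfold K'; pose proof (RRle_abs K); pose proof (Rabs_pos K); nra. }
  apply (Rmult_lt_reg_r (Rabs h)); [assumption|].
  rewrite Rmult_assoc, Rinv_l, Rmult_1_r by lra.
  assert (K' * Rabs h < eps) by (apply (Rmult_lt_reg_r (/ K')); [apply Rinv_0_lt_compat; lra|];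
    replace (K' * Rabs h * / K') with (Rabs h) by (field; lra); exact Hh).
  nra.
Qed.

Lemma derivable_pt_lim_sumR n (F : nat -> R -> R) (L : nat -> R) t :
  (forall j, (1 <= j <= n)%nat -> derivable_pt_lim (F j) t (L j)) ->
  derivable_pt_lim (fun s => sumR n (fun j => F j s)) t (sumR n L).
Proof.
  induction n as [|n IH]; intros H; simpl.
  - apply derivable_pt_lim_const.
  - apply (derivable_pt_lim_plus (fun s => sumR n (fun j => F j s)) (F (S n))).
    + apply IH; intros; apply H; lia.
    + apply H; lia.
Qed.

Lemma continuity_pt_sumR n (F : nat -> R -> R) t :
  (forall j, (1 <= j <= n)%nat -> continuity_pt (F j) t) ->
  continuity_pt (fun s => sumR n (fun j => F j s)) t.
Proof.
  induction n as [|n IH]; intros H; simpl.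
  - apply continuity_pt_const; intros ? ?; reflexivity.
  - apply (continuity_pt_plus (fun s => sumR n (fun j => F j s)) (F (S n))).
    + apply IH; intros; apply H; lia.
    + apply H; lia.
Qed.

Lemma continuity_pt_lipschitz f t L :
  (forall s, Rabs (f s - f t) <= L * Rabs (s - t)) -> continuity_pt f t.
Proof.
  intros Hlip eps Heps.
  set (L' := Rabs L + 1).
  assert (HL' : 0 < L') by (unfold L'; pose proof (Rabs_pos L); lra).
  exists (eps / L'); split; [apply Rlt_gt, Rdiv_lt_0_compat; assumption|].
  intros s [_ Hs]; simpl in *; unfold R_dist in *.
  assert (Hb : Rabs (f s - f t) <= L' * Rabs (s - t)).
  { specialize (Hlip s); unfold L'; pose proof (RRle_abs L); pose proof (Rabs_pos (s - t)); nra. }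
  assert (L' * Rabs (s - t) < eps).
  { apply (Rmult_lt_reg_r (/ L')); [apply Rinv_0_lt_compat; lra|].
    replace (L' * Rabs (s - t) * / L') with (Rabs (s - t)) by (field; lra); exact Hs. }
  lra.
Qed.

Lemma smooth_const c : smooth (fun _ => c).
Proof.
  exists (fun k => match k with O => fun _ => c | S _ => fun _ => 0 end).
  split; [reflexivity|]; intros [|k] t; apply derivable_pt_lim_const.
Qed.

Lemma smooth_plus f g : smooth f -> smooth g -> smooth (fun t => f t + g t).
Proof.
  intros [Df [Hf0 Hf]] [Dg [Hg0 Hg]].
  exists (fun k t => Df k t + Dg k t); split.
  - rewrite Hf0, Hg0; reflexivity.
  - intros k t; apply (derivable_pt_lim_plus (Df k) (Dg k)); auto.
Qed.

Lemma smooth_sumR n (F : nat -> R -> R) :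
  (forall j, (1 <= j <= n)%nat -> smooth (F j)) -> smooth (fun t => sumR n (fun j => F j t)).
Proof.
  induction n as [|n IH]; intros H; simpl.
  - apply smooth_const.
  - apply smooth_plus; [apply IH; intros; apply H; lia | apply H; lia].
Qed.

Lemma smooth_scaled_square a c : smooth (fun t => a * (c - t) ^ 2).
Proof.
  exists (fun k => match k with
                   | O => fun t => a * (c - t) ^ 2
                   | 1%nat => fun t => -2 * a * (c - t)
                   | 2%nat => fun _ => 2 * a
                   | _ => fun _ => 0 end).
  split; [reflexivity|]; intros [|[|[|k]]] t;
    try apply derivable_pt_lim_const;
    apply derivable_pt_lim_quadratic_remainder with (K := Rabs a); intros h.
  - replace (a * (c - (t + h)) ^ 2 - a * (c - t) ^ 2 - -2 * a * (c - t) * h) with (a * h ^ 2) by ring.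
    rewrite Rabs_mult, (Rabs_right (h ^ 2)) by (apply Rle_ge, pow2_ge_0); lra.
  - replace (-2 * a * (c - (t + h)) - -2 * a * (c - t) - 2 * a * h) with 0 by ring.
    rewrite Rabs_R0; pose proof (Rabs_pos a); pose proof (pow2_ge_0 h); nra.
Qed.
Definition pos_part (u : R) : R := Rmax u 0.

Lemma pos_part_ge0 u : 0 <= pos_part u.
Proof. apply Rmax_r. Qed.

Lemma pos_part_ge u : u <= pos_part u.
Proof. apply Rmax_l. Qed.

Lemma pos_part_lipschitz u v : Rabs (pos_part u - pos_part v) <= Rabs (u - v).
Proof.
  unfold pos_part, Rmax; apply Rabs_le.
  pose proof (Rle_abs (u - v)); pose proof (Rle_abs (- (u - v))); rewrite Rabs_Ropp in *.
  destruct (Rle_dec u 0), (Rle_dec v 0); split; lra.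
Qed.

Lemma pos_part_sq_remainder u v :
  Rabs (pos_part v ^ 2 - pos_part u ^ 2 - 2 * pos_part u * (v - u)) <= (v - u) ^ 2.
Proof.
  unfold pos_part, Rmax; apply Rabs_le; pose proof (pow2_ge_0 (v - u)).
  destruct (Rle_dec v 0), (Rle_dec u 0); split; nra.
Qed.

(* [K = 0] is plain convexity; [K > 0] is strong convexity with modulus [2 K]. *)
Definition convex_mod (f : R -> R) (K : R) : Prop :=
  forall a b l, 0 <= l <= 1 ->
    f (l * a + (1 - l) * b) <= l * f a + (1 - l) * f b - K * l * (1 - l) * (a - b) ^ 2.

Lemma convex_mod_ext f g K : (forall s, f s = g s) -> convex_mod g K -> convex_mod f K.
Proof. intros E H a b l Hl; rewrite !E; apply H; assumption. Qed.

Lemma convex_mod_sumR n (F : nat -> R -> R) K :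
  (forall j, (1 <= j <= n)%nat -> convex_mod (F j) (K j)) ->
  convex_mod (fun s => sumR n (fun j => F j s)) (sumR n K).
Proof.
  induction n as [|n IH]; intros H a b l Hl; simpl; [lra|].
  assert (H1 := H (S n) ltac:(lia) a b l Hl).
  assert (H2 := IH ltac:(intros; apply H; lia) a b l Hl); simpl in H2.
  lra.
Qed.

Lemma convex_mod_scaled_square a c K : 0 <= K <= a -> convex_mod (fun t => a * (c - t) ^ 2) K.
Proof.
  intros HK s t l Hl.
  assert (0 <= l * (1 - l) * (s - t) ^ 2)
    by (apply Rmult_le_pos; [apply Rmult_le_pos; lra | apply pow2_ge_0]).
  assert (l * (a * (c - s) ^ 2) + (1 - l) * (a * (c - t) ^ 2) - a * (c - (l * s + (1 - l) * t)) ^ 2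
          = a * (l * (1 - l) * (s - t) ^ 2)) by ring.
  nra.
Qed.

(* [(c - t)_+] is convex and nonnegative, and squaring is convex and nondecreasing on [[0, oo)]. *)
Lemma convex_mod_scaled_pos_part_square a c : 0 <= a -> convex_mod (fun t => a * pos_part (c - t) ^ 2) 0.
Proof.
  intros Ha s t l Hl.
  set (P := pos_part (c - s)); set (Q := pos_part (c - t)).
  set (M := pos_part (c - (l * s + (1 - l) * t))).
  assert (HP : 0 <= P) by apply pos_part_ge0.
  assert (HQ : 0 <= Q) by apply pos_part_ge0.
  assert (HM : 0 <= M) by apply pos_part_ge0.
  assert (HMle : M <= l * P + (1 - l) * Q).
  { pose proof (pos_part_ge (c - s)) as Hs; pose proof (pos_part_ge (c - t)) as Ht; fold P Q in Hs, Ht.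
    unfold M, pos_part at 1, Rmax; destruct Rle_dec; nra. }
  assert (M ^ 2 <= (l * P + (1 - l) * Q) ^ 2) by (apply pow_incr; lra).
  assert ((l * P + (1 - l) * Q) ^ 2 <= l * P ^ 2 + (1 - l) * Q ^ 2).
  { assert (0 <= l * (1 - l) * (P - Q) ^ 2)
      by (apply Rmult_le_pos; [apply Rmult_le_pos; lra | apply pow2_ge_0]).
    assert (l * P ^ 2 + (1 - l) * Q ^ 2 - (l * P + (1 - l) * Q) ^ 2 = l * (1 - l) * (P - Q) ^ 2)
      by ring.
    lra. }
  assert (a * M ^ 2 <= a * (l * P ^ 2 + (1 - l) * Q ^ 2)) by (apply Rmult_le_compat_l; lra).
  lra.
Qed.

Lemma strongly_convex_on_convex_mod S f K : 0 < K -> convex_mod f K -> strongly_convex_on S f.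
Proof.
  intros HK H; exists (2 * K); split; [lra|].
  intros a b l _ _ Hl; specialize (H a b l Hl).
  replace (2 * K / 2) with K by field; exact H.
Qed.

Lemma convex_mod_sublevel f K s t m : 0 <= K -> convex_mod f K ->
  f s <= f t -> (s <= m <= t \/ t <= m <= s) -> f m <= f t.
Proof.
  intros HK Hf Hst Hm.
  destruct (Req_dec s t) as [->|Hne]; [replace m with t by lra; lra|].
  set (l := (m - s) / (t - s)).
  assert (Hinv : (t - s) * / (t - s) = 1) by (field; lra).
  assert (Hl : 0 <= l <= 1).
  { unfold l, Rdiv; destruct Hm as [Hm|Hm].
    - assert (0 < / (t - s)) by (apply Rinv_0_lt_compat; lra). split; nra.
    - assert (/ (t - s) < 0) by (apply Rinv_lt_0_compat; lra). split; nra. }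
  assert (Hmeq : m = l * t + (1 - l) * s) by (unfold l; field; lra).
  pose proof (Hf t s l Hl) as Hc; rewrite <- Hmeq in Hc.
  clearbody l.
  assert (0 <= K * l * (1 - l) * (t - s) ^ 2)
    by (apply Rmult_le_pos; [repeat apply Rmult_le_pos; lra | apply pow2_ge_0]).
  nra.
Qed.

Lemma convex_mod_level_unique f K s t : 0 < K -> convex_mod f K ->
  f s = f t -> f s <= f ((s + t) / 2) -> s = t.
Proof.
  intros HK Hf Hst Hmid.
  pose proof (Hf s t (/ 2) ltac:(lra)) as Hc.
  replace (/ 2 * s + (1 - / 2) * t) with ((s + t) / 2) in Hc by field.
  assert (K * / 2 * (1 - / 2) * (s - t) ^ 2 <= 0) by lra.
  assert ((s - t) ^ 2 = 0) by (pose proof (pow2_ge_0 (s - t)); nra).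
  nra.
Qed.

Lemma pos_part_scale r u : 0 <= r -> pos_part (r * u) = r * pos_part u.
Proof. intros Hr; unfold pos_part, Rmax; destruct Rle_dec, Rle_dec; nra. Qed.

Lemma sub_Rmin_pos_part a c : a - Rmin a c = pos_part (a - c).
Proof. unfold pos_part, Rmin, Rmax; destruct Rle_dec, Rle_dec; lra. Qed.

Definition break_weight (w : nat -> R) (j : nat) : R := (w j / w 1%nat) ^ 2.

Definition cx_term (w x : nat -> R) (j : nat) (t : R) : R :=
  if Nat.eqb j 1 then (x 1%nat - t) ^ 2
  else break_weight w j * pos_part (breakpt w x j - t) ^ 2.

Definition cx_term_deriv (w x : nat -> R) (j : nat) (t : R) : R :=
  if Nat.eqb j 1 then -2 * (x 1%nat - t)
  else -2 * break_weight w j * pos_part (breakpt w x j - t).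

Definition dcx (n : nat) (w x : nat -> R) (t : R) : R := sumR n (fun j => cx_term_deriv w x j t).

Lemma phi_other w t x j : j <> 1%nat -> 0 < w 1%nat -> 0 < w j ->
  phi w t x j = Rmin (x j) (w j / w 1%nat * t).
Proof.
  intros Hj H1 Hwj; unfold phi; rewrite (proj2 (Nat.eqb_neq j 1) Hj).
  set (r := w j / w 1%nat).
  assert (Hr : 0 < r) by (unfold r; apply Rdiv_lt_0_compat; assumption).
  assert (Hq : w 1%nat / w j * x j = x j / r) by (unfold r; field; lra).
  rewrite Hq; unfold Rmin.
  destruct (Rle_dec t (x j / r)) as [Ht|Ht]; destruct (Rle_dec (x j) (r * t)) as [Hx|Hx].
  - apply Rle_antisym; [|assumption].
    replace (x j) with (r * (x j / r)) by (field; lra). apply Rmult_le_compat_l; lra.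
  - reflexivity.
  - reflexivity.
  - exfalso; apply Ht. apply (Rmult_le_reg_l r); [assumption|].
    replace (r * (x j / r)) with (x j) by (field; lra). lra.
Qed.

Lemma cx_term_derivable w x j t : derivable_pt_lim (cx_term w x j) t (cx_term_deriv w x j t).
Proof.
  apply derivable_pt_lim_quadratic_remainder with
    (K := if Nat.eqb j 1 then 1 else break_weight w j).
  intros h; unfold cx_term, cx_term_deriv; destruct (Nat.eqb j 1).
  - replace ((x 1%nat - (t + h)) ^ 2 - (x 1%nat - t) ^ 2 - -2 * (x 1%nat - t) * h) with (h ^ 2) by ring.
    rewrite Rabs_right by (apply Rle_ge, pow2_ge_0); lra.
  - set (u := breakpt w x j - t).
    assert (Ha : 0 <= break_weight w j) by apply pow2_ge_0.
    replace (breakpt w x j - (t + h)) with (u - h) by (unfold u; ring).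
    replace (break_weight w j * pos_part (u - h) ^ 2 - break_weight w j * pos_part u ^ 2
             - -2 * break_weight w j * pos_part u * h)
      with (break_weight w j * (pos_part (u - h) ^ 2 - pos_part u ^ 2 - 2 * pos_part u * (u - h - u)))
      by ring.
    rewrite Rabs_mult, (Rabs_right (break_weight w j)) by lra.
    replace (h ^ 2) with ((u - h - u) ^ 2) by ring.
    apply Rmult_le_compat_l; [assumption | apply pos_part_sq_remainder].
Qed.

Lemma cx_term_deriv_continuous w x j t : continuity_pt (cx_term_deriv w x j) t.
Proof.
  apply continuity_pt_lipschitz with (L := 2 * break_weight w j + 2); intros s.
  assert (Ha : 0 <= break_weight w j) by apply pow2_ge_0.
  pose proof (Rabs_pos (s - t)) as Hst.
  unfold cx_term_deriv; destruct (Nat.eqb j 1).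
  - replace (-2 * (x 1%nat - s) - -2 * (x 1%nat - t)) with (2 * (s - t)) by ring.
    rewrite Rabs_mult, Rabs_right by lra. nra.
  - replace (-2 * break_weight w j * pos_part (breakpt w x j - s)
             - -2 * break_weight w j * pos_part (breakpt w x j - t))
      with (2 * break_weight w j * (pos_part (breakpt w x j - t) - pos_part (breakpt w x j - s)))
      by ring.
    rewrite Rabs_mult, (Rabs_right (2 * break_weight w j)) by lra.
    pose proof (pos_part_lipschitz (breakpt w x j - t) (breakpt w x j - s)) as Hl.
    replace (breakpt w x j - t - (breakpt w x j - s)) with (s - t) in Hl by ring.
    nra.
Qed.

Lemma cx_term_convex_mod w x j :
  convex_mod (cx_term w x j) (if Nat.eqb j 1 then 1 else 0).
Proof.
  unfold cx_term; destruct (Nat.eqb j 1).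
  - apply convex_mod_ext with (fun t => 1 * (x 1%nat - t) ^ 2); [intros; ring|].
    apply convex_mod_scaled_square; lra.
  - apply convex_mod_scaled_pos_part_square, pow2_ge_0.
Qed.

Lemma dcx_continuous n w x t : continuity_pt (dcx n w x) t.
Proof. apply continuity_pt_sumR; intros; apply cx_term_deriv_continuous. Qed.

Definition piece_coef (w x : nat -> R) (a : R) (j : nat) : R :=
  if Nat.eqb j 1 then 1
  else if Rlt_dec a (breakpt w x j) then break_weight w j else 0.

Definition piece_center (w x : nat -> R) (j : nat) : R :=
  if Nat.eqb j 1 then x 1%nat else breakpt w x j.

Definition cx_piece (n : nat) (w x : nat -> R) (a t : R) : R :=
  sumR n (fun j => piece_coef w x a j * (piece_center w x j - t) ^ 2).

Lemma cx_piece_smooth n w x a : smooth (cx_piece n w x a).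
Proof. apply smooth_sumR; intros; apply smooth_scaled_square. Qed.

Lemma cx_piece_convex_mod n w x a : (1 <= n)%nat -> convex_mod (cx_piece n w x a) 1.
Proof.
  intros Hn; rewrite <- (sumR_indicator1 n 1 Hn).
  apply convex_mod_sumR; intros j _; apply convex_mod_scaled_square.
  unfold piece_coef; destruct (Nat.eqb j 1); [lra|].
  destruct Rlt_dec; split; try lra; apply pow2_ge_0.
Qed.

Section CostFunction.
Variables (n : nat) (w x : nat -> R).
Hypothesis Hn : (1 <= n)%nat.
Hypothesis Hw : forall j, (1 <= j <= n)%nat -> 0 < w j.

Lemma cx_sumR t : cx n w x t = sumR n (fun j => cx_term w x j t).
Proof.
  apply sumR_ext; intros j Hj; unfold cx_term.
  destruct (Nat.eqb j 1) eqn:E; [apply Nat.eqb_eq in E; subst; reflexivity|].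
  apply Nat.eqb_neq in E.
  assert (H1 : 0 < w 1%nat) by (apply Hw; lia).
  assert (Hj' : 0 < w j) by (apply Hw; assumption).
  rewrite phi_other, sub_Rmin_pos_part by assumption.
  replace (x j - w j / w 1%nat * t) with (w j / w 1%nat * (breakpt w x j - t))
    by (unfold breakpt; field; lra).
  rewrite pos_part_scale by (left; apply Rdiv_lt_0_compat; assumption).
  unfold break_weight; ring.
Qed.

Lemma cx_derivable t : derivable_pt_lim (cx n w x) t (dcx n w x t).
Proof.
  apply derivable_pt_lim_ext with (fun s => sumR n (fun j => cx_term w x j s)).
  - intros s; symmetry; apply cx_sumR.
  - apply derivable_pt_lim_sumR; intros; apply cx_term_derivable.
Qed.

Lemma cx_convex_mod : convex_mod (cx n w x) 1.
Proof.
  apply convex_mod_ext with (fun s => sumR n (fun j => cx_term w x j s)); [apply cx_sumR|].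
  rewrite <- (sumR_indicator1 n 1 Hn).
  apply convex_mod_sumR; intros; apply cx_term_convex_mod.
Qed.

Lemma cx_eq_piece a b t :
  (forall j, (2 <= j <= n)%nat -> ~ (a < breakpt w x j /\ below_end (breakpt w x j) b)) ->
  in_piece a b t -> cx n w x t = cx_piece n w x a t.
Proof.
  intros Hnb [Hat Hbt]; rewrite cx_sumR; apply sumR_ext; intros j Hj.
  unfold cx_term, piece_coef, piece_center.
  destruct (Nat.eqb j 1) eqn:E; [ring|].
  assert (Hnj := Hnb j ltac:(apply Nat.eqb_neq in E; lia)).
  unfold pos_part; destruct (Rlt_dec a (breakpt w x j)) as [Hl|Hl].
  - destruct b as [e|]; simpl in Hnj, Hbt; [|tauto].
    rewrite Rmax_left; [ring|]. assert (~ breakpt w x j < e) by tauto. lra.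
  - rewrite Rmax_right by lra; ring.
Qed.

Lemma cx_ge_sq t : (x 1%nat - t) ^ 2 <= cx n w x t.
Proof.
  rewrite cx_sumR, <- (sumR_indicator1 n ((x 1%nat - t) ^ 2) Hn).
  apply sumR_le; intros j _; unfold cx_term; destruct (Nat.eqb j 1); [lra|].
  apply Rmult_le_pos; apply pow2_ge_0.
Qed.

(* Continuity on a compact interval, plus [c_x(t) >= (x_1 - t)^2] beyond it. *)
Lemma cx_attains_min : exists t0, x1minus x <= t0 /\
  forall t, x1minus x <= t -> cx n w x t0 <= cx n w x t.
Proof.
  set (L := x1minus x); set (B := Rmax L (x 1%nat + cx n w x L + 1)).
  assert (HLB : L <= B) by apply Rmax_l.
  destruct (continuity_ab_min (cx n w x) L B HLB) as [m [Hm HmLB]].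
  { intros t _; apply derivable_continuous_pt; exists (dcx n w x t); apply cx_derivable. }
  exists m; split; [lra|]; intros t Ht.
  destruct (Rle_dec t B) as [HtB|HtB]; [apply Hm; lra|].
  assert (x 1%nat + cx n w x L + 1 <= B) by apply Rmax_r.
  assert (cx n w x m <= cx n w x L) by (apply Hm; lra).
  pose proof (cx_ge_sq L); pose proof (pow2_ge_0 (x 1%nat - L)); pose proof (cx_ge_sq t).
  assert (t - x 1%nat <= (x 1%nat - t) ^ 2) by nra.
  lra.
Qed.

Lemma cx_x1_lt t : t < x 1%nat -> cx n w x (x 1%nat) < cx n w x t.
Proof.
  intros Ht; rewrite !cx_sumR; apply sumR_lt with 1%nat; [| lia | unfold cx_term; simpl; nra].
  intros j _; unfold cx_term; destruct (Nat.eqb j 1).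
  - replace (x 1%nat - x 1%nat) with 0 by ring. pose proof (pow2_ge_0 (x 1%nat - t)). simpl; lra.
  - apply Rmult_le_compat_l; [apply pow2_ge_0|]; apply pow_incr; split; [apply pos_part_ge0|].
    unfold pos_part, Rmax; destruct Rle_dec, Rle_dec; lra.
Qed.

Lemma cx_argmin_ge_x1 tstar :
  (forall t, x1minus x <= t -> cx n w x tstar <= cx n w x t) -> x 1%nat <= tstar.
Proof.
  intros Hmin; destruct (Rle_dec (x 1%nat) tstar) as [|Hlt]; [assumption|].
  pose proof (Hmin (x 1%nat) (Rmin_r 0 _)); pose proof (cx_x1_lt tstar ltac:(lra)); lra.
Qed.

End CostFunction.

Lemma sq_dist_Rmin_le a c z : z <= c -> (a - Rmin a c) ^ 2 <= (a - z) ^ 2.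
Proof.
  intros Hz; unfold Rmin; destruct Rle_dec.
  - replace (a - a) with 0 by ring; simpl; pose proof (pow2_ge_0 (a - z)); lra.
  - apply pow_incr; lra.
Qed.

Lemma sq_dist_Rmin_eq a c z : z <= c -> (a - Rmin a c) ^ 2 = (a - z) ^ 2 -> z = Rmin a c.
Proof.
  intros Hz; unfold Rmin; destruct Rle_dec; intros E.
  - replace (a - a) with 0 in E by ring; simpl in E.
    assert (Hsq : (a - z) * (a - z) = 0) by lra.
    apply Rmult_integral in Hsq; lra.
  - assert (Hsq : (a - z - (a - c)) * (a - z + (a - c)) = 0) by (simpl in E; lra).
    apply Rmult_integral in Hsq; lra.
Qed.

Section Projection.
Variables (n : nat) (w x : nat -> R).
Hypothesis Hn : (1 <= n)%nat.
Hypothesis Hw : forall j, (1 <= j <= n)%nat -> 0 < w j.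
Hypothesis Hx : forall j, (2 <= j <= n)%nat -> 0 < x j.

Lemma Omega1_coord_le z j : Omega1 n w z -> (2 <= j <= n)%nat -> z j <= w j / w 1%nat * z 1%nat.
Proof.
  intros (_ & _ & Hz) Hj.
  assert (H1 : 0 < w 1%nat) by (apply Hw; lia).
  apply (Rmult_le_reg_l (w 1%nat)); [assumption|].
  replace (w 1%nat * (w j / w 1%nat * z 1%nat)) with (w j * z 1%nat) by (field; lra).
  apply Hz; assumption.
Qed.

Lemma phi_in_Omega1 t : 0 <= t <= 1 -> Omega1 n w (phi w t x).
Proof.
  intros Ht; assert (H1 : 0 < w 1%nat) by (apply Hw; lia).
  split; [|split; [exact (proj2 Ht)|]].
  - intros j Hj; destruct (Nat.eq_dec j 1) as [->|Hne]; [exact (proj1 Ht)|].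
    assert (Hwj : 0 < w j) by (apply Hw; lia).
    rewrite phi_other by assumption; apply Rmin_glb; [left; apply Hx; lia|].
    apply Rmult_le_pos; [left; apply Rdiv_lt_0_compat|]; lra.
  - intros j Hj; assert (Hwj : 0 < w j) by (apply Hw; lia).
    rewrite phi_other by (lia || assumption); change (phi w t x 1%nat) with t.
    apply Rle_trans with (w 1%nat * (w j / w 1%nat * t));
      [apply Rmult_le_compat_l; [lra | apply Rmin_r]|].
    right; field; lra.
Qed.

Lemma phi_sq_dist_le z j : Omega1 n w z -> (1 <= j <= n)%nat ->
  (x j - phi w (z 1%nat) x j) ^ 2 <= (x j - z j) ^ 2.
Proof.
  intros Hz Hj; destruct (Nat.eq_dec j 1) as [->|Hne]; [right; reflexivity|].
  rewrite phi_other by (assumption || (apply Hw; lia)).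
  apply sq_dist_Rmin_le, Omega1_coord_le; [assumption | lia].
Qed.

Lemma phi_sq_dist_eq z j : Omega1 n w z -> (1 <= j <= n)%nat ->
  (x j - phi w (z 1%nat) x j) ^ 2 = (x j - z j) ^ 2 -> z j = phi w (z 1%nat) x j.
Proof.
  intros Hz Hj; destruct (Nat.eq_dec j 1) as [->|Hne]; [reflexivity|].
  rewrite phi_other by (assumption || (apply Hw; lia)).
  apply sq_dist_Rmin_eq, Omega1_coord_le; [assumption | lia].
Qed.

Lemma cx_le_dist z : Omega1 n w z -> cx n w x (z 1%nat) <= norm2 n (fun j => x j - z j).
Proof. intros Hz; apply sumR_le; intros; apply phi_sq_dist_le; assumption. Qed.

Lemma Omega1_z1_range z : Omega1 n w z -> 0 <= z 1%nat <= 1.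
Proof. intros (Hz & Hz1 & _); split; [apply Hz; lia | exact Hz1]. Qed.

Section Minimizer.
Variable th : R.
Hypothesis Hth : 0 <= th <= 1.
Hypothesis Hmin : forall t, 0 <= t <= 1 -> cx n w x th <= cx n w x t.

Lemma Omega1_dist_ge z : Omega1 n w z -> cx n w x th <= norm2 n (fun j => x j - z j).
Proof.
  intros Hz; apply Rle_trans with (cx n w x (z 1%nat));
    [apply Hmin, Omega1_z1_range | apply cx_le_dist]; assumption.
Qed.

(* Equality forces [z_1 = th] by strict convexity of [c_x], and then every coordinate
   inequality of [phi_sq_dist_le] to be an equality. *)
Lemma Omega1_dist_eq z : Omega1 n w z -> norm2 n (fun j => x j - z j) = cx n w x th ->
  forall j, (1 <= j <= n)%nat -> z j = phi w th x j.
Proof.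
  intros Hz Heq.
  pose proof (Omega1_z1_range z Hz) as Hz1.
  assert (Hlev : cx n w x (z 1%nat) = cx n w x th).
  { pose proof (cx_le_dist z Hz); pose proof (Hmin (z 1%nat) Hz1); lra. }
  assert (Hz1th : z 1%nat = th).
  { apply (convex_mod_level_unique (cx n w x) 1);
      [lra | apply cx_convex_mod; assumption | assumption |].
    rewrite Hlev; apply Hmin; lra. }
  intros j Hj; rewrite <- Hz1th; apply phi_sq_dist_eq; [assumption..|].
  apply (sumR_eq_le n (fun j => (x j - phi w (z 1%nat) x j) ^ 2) (fun j => (x j - z j) ^ 2));
    [intros; apply phi_sq_dist_le; assumption | | assumption].
  change (cx n w x (z 1%nat) = norm2 n (fun j => x j - z j)); lra.
Qed.

Lemma projection_Omega1_iff z :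
  (Omega1 n w z /\ forall z', Omega1 n w z' ->
     enorm n (fun j => x j - z j) <= enorm n (fun j => x j - z' j))
  <-> (forall j, (1 <= j <= n)%nat -> z j = phi w th x j).
Proof.
  assert (Hnorm0 : forall v, 0 <= norm2 n v) by (intros; apply sumR_nonneg; intros; apply pow2_ge_0).
  split.
  - intros [Hz Hopt]; apply Omega1_dist_eq; [assumption|].
    pose proof (Hopt _ (phi_in_Omega1 th Hth)) as Hle.
    apply sqrt_le_0 in Hle; [|apply Hnorm0..].
    pose proof (Omega1_dist_ge z Hz); change (norm2 n _) with (cx n w x th) in Hle at 2; lra.
  - intros Hzphi.
    assert (Hdist : norm2 n (fun j => x j - z j) = cx n w x th)
      by (apply sumR_ext; intros j Hj; rewrite Hzphi by assumption; reflexivity).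
    destruct (phi_in_Omega1 th Hth) as (Hpos & Hle1 & Hcone).
    split; [split; [|split]|].
    + intros j Hj; rewrite Hzphi; auto.
    + rewrite Hzphi by lia; assumption.
    + intros j Hj; rewrite !Hzphi by lia; auto.
    + intros z' Hz'; apply sqrt_le_1_alt; rewrite Hdist; apply Omega1_dist_ge; assumption.
Qed.

End Minimizer.
End Projection.

(* The global minimiser satisfies [tstar >= x_1] ([cx_argmin_ge_x1]), so [tstar < x_1^+]
   forces [x_1^+ = 0]; in the other cases [[0, 1]] lies on one side of [tstar] or contains it. *)
Lemma cx_clamped_argmin n w x tstar : (1 <= n)%nat -> (forall j, (1 <= j <= n)%nat -> 0 < w j) ->
  x1minus x <= tstar -> (forall t, x1minus x <= t -> cx n w x tstar <= cx n w x t) ->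
  exists th,
    (if Rlt_dec tstar (x1plus x) then phi w (x1plus x) x
     else if Rle_dec tstar 1 then phi w tstar x else phi w 1 x) = phi w th x /\
    0 <= th <= 1 /\ forall t, 0 <= t <= 1 -> cx n w x th <= cx n w x t.
Proof.
  intros Hn Hw Hts Hmin.
  pose proof (cx_argmin_ge_x1 n w x Hn Hw tstar Hmin) as Hx1.
  assert (Hneg : x1minus x <= 0) by apply Rmin_l.
  assert (Hconv := cx_convex_mod n w x Hn Hw).
  assert (Hsub : forall m t, 0 <= t <= 1 -> (tstar <= m <= t \/ t <= m <= tstar) ->
            cx n w x m <= cx n w x t)
    by (intros m t Ht Hm; apply (convex_mod_sublevel _ 1 tstar);
        [lra | assumption | apply Hmin; lra | assumption]).
  destruct (Rlt_dec tstar (x1plus x)) as [Hlt|Hge].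
  - assert (x1plus x = 0 /\ tstar < 0) as [-> Hts0].
    { unfold x1plus, Rmin, Rmax in *; repeat destruct Rle_dec; lra. }
    exists 0; repeat split; try lra; intros t Ht; apply Hsub; lra.
  - assert (0 <= x1plus x) by (apply Rmin_glb; [lra | apply Rmax_l]).
    destruct (Rle_dec tstar 1).
    + exists tstar; repeat split; try lra; intros t Ht; apply Hmin; lra.
    + exists 1; repeat split; try lra; intros t Ht; apply Hsub; lra.
Qed.

Theorem mainTheorem4 (n : nat) (w x : nat -> R)
  (Hn : (1 <= n)%nat)
  (Hw : forall j, (1 <= j <= n)%nat -> 0 < w j)
  (Hx : forall j, (2 <= j <= n)%nat -> 0 < x j) :
  (forall (a : R) (b : option R),
     x1minus x <= a -> below_end a b ->
     (forall j, (2 <= j <= n)%nat ->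
        ~ (a < breakpt w x j /\ below_end (breakpt w x j) b)) ->
     exists g : R -> R,
       smooth g /\
       (forall t, in_piece a b t -> cx n w x t = g t) /\
       strongly_convex_on (in_piece a b) g) /\
  (forall j, (2 <= j <= n)%nat ->
     exists delta (d : R -> R), 0 < delta /\
       (forall t, Rabs (t - breakpt w x j) < delta ->
                  derivable_pt_lim (cx n w x) t (d t)) /\
       continuity_pt d (breakpt w x j)) /\
  strongly_convex_on (fun t => x1minus x <= t) (cx n w x) /\
  (exists t0, x1minus x <= t0 /\
     forall t, x1minus x <= t -> cx n w x t0 <= cx n w x t) /\
  (forall tstar, x1minus x <= tstar ->
     (forall t, x1minus x <= t -> cx n w x tstar <= cx n w x t) ->
     let p := if Rlt_dec tstar (x1plus x) then phi w (x1plus x) x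
              else if Rle_dec tstar 1 then phi w tstar x
              else phi w 1 x in
     forall z : nat -> R,
       (Omega1 n w z /\
        forall z', Omega1 n w z' ->
          enorm n (fun j => x j - z j) <= enorm n (fun j => x j - z' j))
       <-> (forall j, (1 <= j <= n)%nat -> z j = p j)).
Proof.
  split; [|split; [|split; [|split]]].
  - intros a b _ _ Hnb; exists (cx_piece n w x a); split; [apply cx_piece_smooth|]; split.
    + intros t; apply cx_eq_piece with (b := b); assumption.
    + apply strongly_convex_on_convex_mod with 1; [lra | apply cx_piece_convex_mod; assumption].
  - intros j _; exists 1, (dcx n w x); split; [lra|]; split.
    + intros t _; apply cx_derivable; assumption.
    + apply dcx_continuous.
  - apply strongly_convex_on_convex_mod with 1; [lra | apply cx_convex_mod; assumption].
  - apply cx_attains_min; assumption.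
  - intros tstar Hts Hmin p z.
    destruct (cx_clamped_argmin n w x tstar Hn Hw Hts Hmin) as (th & Hp & Hth & Hthmin).
    unfold p; rewrite Hp.
    apply projection_Omega1_iff; assumption.
Qed.
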